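(* Let $(a_p)_{p\in\mathbb{Z}}$ be a strictly positive rapidly decreasing sequence with $a_p=a_{-p}$ and $(a_p/a_{p+1})$ bounded, and let $H$ be the associated Hilbert completion of $L^*\mathbb{C}^n$. Transport operators on $H$ to $L^{2,*}\mathbb{C}^n$ via the isometry $T:H\to L^{2,*}\mathbb{C}^n$, $Te_p=\sqrt{a_p}\,e_p$. Then the inclusion $L_{\mathrm{pol}}U_n\to\mathrm{GL}_{\mathcal{J}}(L^{2,*}\mathbb{C}^n)$, $\sum_qz^qA_q\mapsto T\big(\sum_qz^q\otimes A_q\big)T^{-1}$, is homotopic (through maps into $\mathrm{GL}_{\mathcal{J}}(L^{2,*}\mathbb{C}^n)$) to the standard inclusion $\sum_qz^qA_q\mapsto\sum_q\zeta_0^q\otimes A_q$, which factors through $LU_n$, where $\zeta_0e_p=e_{p-1}$.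
   Context: $\mathcal{S}^*$ (the dual of rapidly decreasing complex $\mathbb{Z}$-indexed sequences) is identified with $L^*\mathbb{C}$ via Fourier coefficients, with basis $e_p$; $H$ is the completion of $\mathcal{S}^*\otimes\mathbb{C}^n$ for the inner product $\sum_pb^p\overline{c^p}a_p$ tensored with the standard inner product on $\mathbb{C}^n$. On $H$, $z$ acts by $ze_p=e_{p-1}$ and a polynomial loop $\sum_qz^qA_q$ ($A_q\in M_n(\mathbb{C})$) acts by $\sum_qz^q\otimes A_q$. $L^{2,*}\mathbb{C}^n$ is the dual of $L^2\mathbb{C}^n$, identified with $\ell^2(\mathbb{Z})\otimes\mathbb{C}^n$ with orthonormal basis $e_p$. The polarising operator $J$ is $Je_p=-(-1)^{\mathrm{sign}(p)}ie_p$ (tensored with $I_n$); $\mathcal{J}$ is its class modulo Hilbert–Schmidt operators, and $\mathrm{GL}_{\mathcal{J}}$ is the group of invertible bounded operators $A$ with $[A,J]$ Hilbert–Schmidt. *)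

From HB Require Import structures.
From mathcomp Require Import all_boot all_order all_algebra.
From mathcomp Require Import complex.
From mathcomp Require Import all_classical all_reals all_analysis.
Set Implicit Arguments. Unset Strict Implicit. Unset Printing Implicit Defensive.
Import Order.TTheory GRing.Theory Num.Theory.
Local Open Scope classical_set_scope.
Local Open Scope ring_scope.

(* Vectors in (C^Z) (x) C^n : x p i is the coefficient of e_p (x) f_i.       *)
Definition vec (R : realType) (n : nat) := int -> 'I_n -> R[i].
Definition op (R : realType) (n : nat) := vec R n -> vec R n.

Definition absc (R : realType) (z : R[i]) : R := Normc.normc z.

Definition vadd (R : realType) (n : nat) (x y : vec R n) : vec R n := fun p i => x p i + y p i.
Definition vsub (R : realType) (n : nat) (x y : vec R n) : vec R n := fun p i => x p i - y p i.
Definition vscale (R : realType) (n : nat) (c : R[i]) (x : vec R n) : vec R n := fun p i => c * x p i.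
Definition opsub (R : realType) (n : nat) (A B : op R n) : op R n := fun x => vsub (A x) (B x).

Definition l2sq (R : realType) (n : nat) (x : vec R n) : \bar R :=
  \esum_(k in [set: int * 'I_n]) ((absc (x k.1 k.2)) ^+ 2)%:E.
Definition inl2 (R : realType) (n : nat) (x : vec R n) : Prop := (l2sq x < +oo)%E.

Definition basis R n (p : int) (i : 'I_n) : vec R n :=
  fun r j => if (r == p) && (j == i) then 1 else 0.

Definition bounded_linear (R : realType) (n : nat) (A : op R n) : Prop :=
  (forall x, inl2 x -> inl2 (A x)) /\
  (forall (c : R[i]) x y, inl2 x -> inl2 y ->
      A (vadd (vscale c x) y) = vadd (vscale c (A x)) (A y)) /\
  (exists M : R, forall x, inl2 x -> (l2sq (A x) <= M%:E * l2sq x)%E).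

Definition opnorm_sq (R : realType) (n : nat) (A : op R n) : \bar R :=
  ereal_sup [set l2sq (A x) | x in [set x | inl2 x /\ (l2sq x <= 1)%E]].
Definition hs_sq (R : realType) (n : nat) (A : op R n) : \bar R :=
  \esum_(k in [set: int * 'I_n]) l2sq (A (basis R k.1 k.2)).

Definition Jop (R : realType) (n : nat) : op R n :=
  fun x p i => (if (0 < p)%R then 'i%C else - 'i%C) * x p i.
Definition commJ (R : realType) (n : nat) (A : op R n) : op R n :=
  fun x => vsub (A (Jop x)) (Jop (A x)).

Definition GLJ (R : realType) (n : nat) (A : op R n) : Prop :=
  bounded_linear A /\
  (exists B : op R n, bounded_linear B /\
     forall x, inl2 x -> B (A x) = x /\ A (B x) = x) /\
  (hs_sq (commJ A) < +oo)%E.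

(* closeness for the topology of GL_J, given by ||A|| + ||[A,J]||_HS *)
Definition Jclose (R : realType) (n : nat) (A B : op R n) (eps : R) : Prop :=
  (opnorm_sq (opsub A B) < eps%:E)%E /\ (hs_sq (commJ (opsub A B)) < eps%:E)%E.

(* Polynomial loops: coefficient functions q |-> A_q, supported in [-N,N]. *)
Definition coeffs (R : realType) (n : nat) := int -> 'M[R[i]]_n.
Definition supported (R : realType) (n : nat) (N : nat) (A : coeffs R n) : Prop :=
  forall q : int, (N%:Z < `|q|)%R -> A q = 0.
Definition loop_eval (R : realType) (n : nat) (N : nat) (A : coeffs R n) (z : R[i]) : 'M[R[i]]_n :=
  \sum_(k < (2 * N).+1) (z ^ (k%:Z - N%:Z)) *: A (k%:Z - N%:Z).
Definition unitary_loop (R : realType) (n : nat) (N : nat) (A : coeffs R n) : Prop :=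
  forall z : R[i], absc z = 1 ->
    loop_eval N A z *m map_mx Num.conj (loop_eval N A z)^T = 1%:M.
Definition polyloop (R : realType) (n : nat) (N : nat) (A : coeffs R n) : Prop :=
  supported N A /\ unitary_loop N A.

(* z^q acting on sequences: z e_p = e_{p-1}, so (z^q x)_p = x_{p+q};
   the same formula describes zeta_0^q on L^{2,*}C^n. *)
Definition shift (R : realType) (n : nat) (q : int) (x : vec R n) : vec R n := fun p j => x (p + q) j.
Definition mxact (R : realType) (n : nat) (M : 'M[R[i]]_n) (x : vec R n) : vec R n :=
  fun p i => \sum_(j < n) M i j * x p j.
Definition loop_act (R : realType) (n : nat) (N : nat) (A : coeffs R n) : op R n :=
  fun x p i => \sum_(k < (2 * N).+1)
                 mxact (A (k%:Z - N%:Z)) (shift (k%:Z - N%:Z) x) p i.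

Definition Tmap (R : realType) (n : nat) (a : int -> R) : op R n :=
  fun x p i => (real_complex R (Num.sqrt (a p))) * x p i.
Definition Tinv (R : realType) (n : nat) (a : int -> R) : op R n :=
  fun x p i => (real_complex R (Num.sqrt (a p)))^-1 * x p i.
Definition PhiT (R : realType) (n : nat) (a : int -> R) (N : nat) (A : coeffs R n) : op R n :=
  fun x => Tmap a (loop_act N A (Tinv a x)).

Definition rapidly_decreasing (R : realType) (a : int -> R) : Prop :=
  forall k : nat, exists M : R, forall p : int, `|p|%:~R ^+ k * `|a p| <= M.

From Pilot Require Import Defs.
From HB Require Import structures.
From mathcomp Require Import all_boot all_order all_algebra.
From mathcomp Require Import complex.
From mathcomp Require Import all_classical all_reals all_analysis.
From mathcomp Require Import ring lra zify.
Import Order.TTheory GRing.Theory Num.Theory.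
Local Open Scope classical_set_scope.
Local Open Scope ring_scope.
Local Open Scope complex_scope.
Set Implicit Arguments. Unset Strict Implicit. Unset Printing Implicit Defensive.

(* The weights w_t(p) = a_p^((1-t)/2) interpolate between T (t = 0) and the
   identity (t = 1), and the homotopy is F_t(A) = w_t L(A) w_t^-1, where L(A) is
   the action of sum_q z^q (x) A_q.  F_t(A) is a band operator: finitely many
   diagonals, with coefficients (w_t(p) / w_t(p+q)) A_q.  These are bounded
   uniformly in p, since a_p / a_(p+1) is bounded and, a being even, so is
   a_(p+1) / a_p.  A band operator with bounded coefficients is bounded, and its
   commutator with J is a band operator supported on finitely many columns, hence
   Hilbert-Schmidt.  Unitarity of the loop on the unit circle gives coefficient
   identities showing that w_t L(A^* ) w_t^-1, with (A^* )_q = (A_(-q))^*, inverts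
   F_t(A).  Continuity holds because the coefficients are Lipschitz in t and A. *)

Section ComplexModulus.
Variable R : realType.
Implicit Types (r : R) (y z : R[i]).

Lemma abscE z : (absc z)%:C = `|z|.
Proof. by case: z => a b; rewrite normc_def. Qed.

Lemma absc_ge0 z : 0 <= absc z.
Proof. by case: z => a b; apply: sqrtr_ge0. Qed.

Lemma abscM y z : absc (y * z) = absc y * absc z.
Proof. exact: Normc.normcM. Qed.

Lemma abscD y z : absc (y + z) <= absc y + absc z.
Proof. exact: le_normcD. Qed.

Lemma abscB y z : absc (y - z) <= absc y + absc z.
Proof. by rewrite -[absc z]normcN; apply: abscD. Qed.

Lemma absc0 : absc (0 : R[i]) = 0.
Proof. exact: Normc.normc0. Qed.

Lemma absc1 : absc (1 : R[i]) = 1.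
Proof. exact: Normc.normc1. Qed.

Lemma absc_real r : absc r%:C = `|r|.
Proof. by rewrite /absc /Normc.normc /= expr0n addr0 sqrtr_sqr. Qed.

Lemma absc_sum (I : Type) (s : seq I) (P : pred I) (F : I -> R[i]) :
  absc (\sum_(i <- s | P i) F i) <= \sum_(i <- s | P i) absc (F i).
Proof.
apply: (big_rec2 (fun x (b : R) => absc x <= b)); first by rewrite absc0.
by move=> i x b _ h; apply: le_trans (abscD _ _) _; apply: lerD.
Qed.

Lemma unit_circle_neq0 z : absc z = 1 -> z != 0.
Proof. by apply: contra_eqN => /eqP ->; rewrite absc0 eq_sym oner_eq0. Qed.

Lemma conj_unit_circle z : absc z = 1 -> Num.conj z = z^-1.
Proof. by move=> h; rewrite invC_norm -abscE h expr1n invr1 mul1r. Qed.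

End ComplexModulus.

Lemma sqr_sum_le (R : realFieldType) (m : nat) (b : 'I_m -> R) :
  (\sum_(k < m) b k) ^+ 2 <= m%:R * \sum_(k < m) b k ^+ 2.
Proof.
rewrite -(ler_pM2l (_ : 0 < 2)) // expr2 mulr_suml.
under eq_bigr do rewrite mulr_sumr.
have -> : 2 * (m%:R * \sum_(k < m) b k ^+ 2) =
          \sum_(k < m) \sum_(l < m) (b k ^+ 2 + b l ^+ 2).
  under [RHS]eq_bigr do rewrite big_split /= sumr_const card_ord.
  by rewrite big_split /= sumr_const card_ord sumrMnl !mulr_natl mulr2n.
rewrite mulr_sumr; apply: ler_sum => k _; rewrite mulr_sumr; apply: ler_sum => l _.
(* 2 b_k b_l <= b_k^2 + b_l^2 *)
by rewrite -subr_ge0 (_ : _ - _ = (b k - b l) ^+ 2) ?sqr_ge0 // sqrrB; ring.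
Qed.

Section ExtendedSums.
Variable R : realType.
Local Open Scope ereal_scope.

Lemma esum_setT_fin (T : finType) (g : T -> \bar R) :
  (forall i, 0 <= g i) -> \esum_(i in [set: T]) g i = \sum_(i : T) g i.
Proof.
move=> g0; rewrite esum_fset; [|exact: finite_finset|by move=> i _].
rewrite (fsbigE (enum T)) ?enum_uniq // => [|i _]; last by rewrite mem_enum.
by under eq_bigl do rewrite in_setT; rewrite big_enum.
Qed.

Lemma esum_int_ord (n : nat) (f : int * 'I_n -> \bar R) : (forall k, 0 <= f k) ->
  \esum_(k in [set: int * 'I_n]) f k = \esum_(p in [set: int]) \sum_(i < n) f (p, i).
Proof.
move=> f0; under [RHS]eq_esum do rewrite -esum_setT_fin //.
rewrite esum_esum //; congr esum; last by apply/funext => -[].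
by apply/seteqP; split => -[].
Qed.

Lemma esumZl_le (T : choiceType) (I : set T) (c : R) (f : T -> R) :
  (0 <= c)%R -> (forall i, 0 <= f i)%R ->
  \esum_(i in I) (c * f i)%:E <= c%:E * \esum_(i in I) (f i)%:E.
Proof.
move=> c0 f0; apply: ge_ereal_sup => _ [X [finX XI] <-].
rewrite fsumEFin // -mulr_fsumr EFinM lee_wpmul2l ?lee_fin //.
by rewrite -fsumEFin //; apply: ereal_sup_ubound; exists X.
Qed.

Lemma esum_addr_int (f : int -> \bar R) (s : int) :
  \esum_(p in [set: int]) f (p + s)%R = \esum_(p in [set: int]) f p.
Proof.
symmetry; apply: reindex_esum; rewrite setTT_bijective.
by exists (fun p => (p - s)%R) => p; [apply: addrK | apply: subrK].
Qed.

Lemma esum_int_window (L : nat) (f : int -> \bar R) :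
  (forall r, 0 <= f r) -> (forall r : int, (L%:Z < `|r|)%R -> f r = 0) ->
  \esum_(r in [set: int]) f r = \sum_(k < (2 * L).+1) f (k%:Z - L%:Z)%R.
Proof.
move=> f0 fL; pose e (k : 'I_(2 * L).+1) := (k%:Z - L%:Z)%R.
rewrite (esumID (e @` [set: 'I_(2 * L).+1])) // [X in _ + X]esum1 ?adde0.
  rewrite setTI esum_image ?esum_setT_fin // => i j _ _ /addIr /eqP.
  by rewrite eqz_nat => /eqP /val_inj.
move=> r [_ /=] hr; apply: fL; rewrite ltNge; apply: contra_notN hr => hr.
have hk : (absz (r + L%:Z)%R < (2 * L).+1)%N by move: hr; rewrite ler_norml; lia.
exists (Ordinal hk) => //; rewrite /e /=.
by rewrite gez0_abs ?addrK //; move: hr; rewrite ler_norml; lia.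
Qed.

End ExtendedSums.

Section BandOperators.
Variables (R : realType) (n : nat).
Implicit Types (x : vec R n) (C : R).

Definition band_op (m : nat) (s : 'I_m -> int)
    (W : 'I_m -> int -> 'I_n -> 'I_n -> R[i]) : op R n :=
  fun x p i => \sum_(k < m) \sum_(j < n) W k p i j * x (p + s k) j.

Definition row_sq x (p : int) : R := \sum_(i < n) absc (x p i) ^+ 2.

Definition band_bound (m : nat) C : R := (m * n)%:R ^+ 2 * C ^+ 2.

Lemma row_sq_ge0 x p : 0 <= row_sq x p.
Proof. by apply: sumr_ge0 => i _; apply: sqr_ge0. Qed.

Lemma band_bound_ge0 m C : 0 <= band_bound m C.
Proof. by rewrite mulr_ge0 ?sqr_ge0. Qed.

Lemma l2sq_rows x : l2sq x = \esum_(p in [set: int]) (row_sq x p)%:E.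
Proof.
rewrite /l2sq esum_int_ord => [|k]; last by rewrite lee_fin sqr_ge0.
by apply: eq_esum => p _; rewrite sumEFin.
Qed.

Lemma l2sq_ge0 x : (0 <= l2sq x)%E.
Proof. by apply: esum_ge0 => k _; rewrite lee_fin sqr_ge0. Qed.

Lemma inl2_fineK x : inl2 x -> l2sq x = (fine (l2sq x))%:E.
Proof. by move=> h; rewrite fineK // ge0_fin_numE // l2sq_ge0. Qed.

Section Bounded.
Variables (m : nat) (s : 'I_m -> int) (W : 'I_m -> int -> 'I_n -> 'I_n -> R[i]) (C : R).
Hypotheses (C_ge0 : 0 <= C) (W_le : forall k p i j, absc (W k p i j) <= C).

Lemma band_op_sq_le x p i :
  absc (band_op s W x p i) ^+ 2 <= (m * n)%:R * C ^+ 2 * \sum_(k < m) row_sq x (p + s k).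
Proof.
have sum_le : absc (band_op s W x p i) <=
              \sum_(k < m) C * \sum_(j < n) absc (x (p + s k) j).
  apply: le_trans (absc_sum _ _ _) _; apply: ler_sum => k _.
  apply: le_trans (absc_sum _ _ _) _; rewrite mulr_sumr; apply: ler_sum => j _.
  by rewrite abscM ler_wpM2r ?absc_ge0.
have sum_ge0 : 0 <= \sum_(k < m) C * \sum_(j < n) absc (x (p + s k) j).
  by rewrite sumr_ge0 // => k _; rewrite mulr_ge0 ?sumr_ge0 // => j _; apply: absc_ge0.
apply: le_trans (_ : (\sum_(k < m) C * \sum_(j < n) absc (x (p + s k) j)) ^+ 2 <= _).
  by rewrite lerXn2r ?nnegrE ?absc_ge0.
apply: le_trans (sqr_sum_le _) _.
rewrite natrM -2!mulrA ler_wpM2l // !mulr_sumr; apply: ler_sum => k _.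
rewrite exprMn [X in _ <= X]mulrCA ler_wpM2l ?sqr_ge0 //.
by apply: le_trans (sqr_sum_le _) _; rewrite ler_wpM2l.
Qed.

Lemma l2sq_band_op_le x : inl2 x ->
  (l2sq (band_op s W x) <= (band_bound m C)%:E * l2sq x)%E.
Proof.
move=> hx; rewrite (inl2_fineK hx); set X := fine (l2sq x).
have rows_X : (\esum_(p in [set: int]) (row_sq x p)%:E)%E = X%:E.
  by rewrite -l2sq_rows -inl2_fineK.
set c := (m * n)%:R * C ^+ 2 * n%:R.
have c_ge0 : 0 <= c by rewrite !mulr_ge0 ?sqr_ge0.
rewrite l2sq_rows; apply: le_trans (_ : (\esum_(p in [set: int])
    (c * \sum_(k < m) row_sq x (p + s k))%:E <= _)%E).
  apply: le_esum => p _; rewrite lee_fin {1}/row_sq.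
  apply: le_trans (_ : \sum_(i < n) ((m * n)%:R * C ^+ 2 *
                         \sum_(k < m) row_sq x (p + s k)) <= _).
    by apply: ler_sum => i _; apply: band_op_sq_le.
  by rewrite sumr_const card_ord -[X in X <= _]mulr_natr /c mulrAC.
apply: le_trans (esumZl_le _ c_ge0 _) _ => [p|].
  by apply: sumr_ge0 => k _; apply: row_sq_ge0.
under eq_esum do rewrite -sumEFin.
rewrite esum_sum => [|p k _ _]; last by rewrite lee_fin row_sq_ge0.
under eq_bigr do rewrite (esum_addr_int (fun p => (row_sq x p)%:E)) rows_X.
rewrite sumEFin sumr_const card_ord -!EFinM lee_fin le_eqVlt; apply/orP; left.
by apply/eqP; rewrite /band_bound /c -mulr_natr !natrM; ring.
Qed.

Lemma band_op_linear (c : R[i]) x y :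
  band_op s W (vadd (vscale c x) y) = vadd (vscale c (band_op s W x)) (band_op s W y).
Proof.
apply/funext => p; apply/funext => i; rewrite /band_op /vadd /vscale.
rewrite mulr_sumr -big_split; apply: eq_bigr => k _.
rewrite mulr_sumr -big_split; apply: eq_bigr => j _.
by rewrite mulrDr mulrCA.
Qed.

Lemma band_op_bounded_linear : bounded_linear (band_op s W).
Proof.
split=> [x hx|]; last split=> [c x y _ _|]; last first.
- by exists (band_bound m C) => x; apply: l2sq_band_op_le.
- exact: band_op_linear.
apply: le_lt_trans (l2sq_band_op_le hx) _.
by rewrite (inl2_fineK hx) -EFinM ltry.
Qed.

Lemma opnorm_sq_band_op_le : (opnorm_sq (band_op s W) <= (band_bound m C)%:E)%E.
Proof.
apply: ge_ereal_sup => _ [x [hx hx1] <-]; apply: le_trans (l2sq_band_op_le hx) _.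
by rewrite -[X in (_ <= X)%E]mule1 lee_wpmul2l ?lee_fin ?band_bound_ge0.
Qed.

End Bounded.

Lemma band_opB (m : nat) (s : 'I_m -> int) W1 W2 :
  opsub (band_op s W1) (band_op s W2) =
  band_op s (fun k p i j => W1 k p i j - W2 k p i j).
Proof.
apply/funext => x; apply/funext => p; apply/funext => i.
rewrite /opsub /vsub /band_op -sumrB; apply: eq_bigr => k _.
by rewrite -sumrB; apply: eq_bigr => j _; rewrite mulrBl.
Qed.

Definition J_sign (p : int) : R[i] := if (0 < p)%R then 'i else - 'i.

Lemma absc_J_sign p : absc (J_sign p) = 1.
Proof. by rewrite /J_sign /absc /Normc.normc; case: ifP; rewrite /= ?oppr0 ?sqrrN expr0n expr1n add0r sqrtr1. Qed.

Lemma commJ_band_op (m : nat) (s : 'I_m -> int) W :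
  commJ (band_op s W) =
  band_op s (fun k p i j => W k p i j * (J_sign (p + s k) - J_sign p)).
Proof.
apply/funext => x; apply/funext => p; apply/funext => i.
rewrite /commJ /vsub /band_op /Jop mulr_sumr -sumrB; apply: eq_bigr => k _.
rewrite mulr_sumr -sumrB; apply: eq_bigr => j _.
by rewrite mulrBr mulrBl mulrA [_ * (W _ _ _ _ * _)]mulrCA mulrA.
Qed.

Lemma l2sq_basis r l : l2sq (@Defs.basis R n r l) = 1%E.
Proof.
have rowE p : row_sq (@Defs.basis R n r l) p = if p == r then 1 else 0.
  rewrite /row_sq /Defs.basis; case: (p == r).
    rewrite (bigD1 l) // big1 => [|i /negPf ->]; last by rewrite andTb absc0 expr0n.
    by rewrite andTb eqxx absc1 expr1n /= addr0.
  by rewrite big1 // => i _; rewrite andFb absc0 expr0n.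
rewrite l2sq_rows (esumID [set r]) => [|p _]; last by rewrite lee_fin row_sq_ge0.
rewrite setTI esum_set1 ?rowE ?eqxx ?lee_fin // esum1 ?adde0 // => p [_ /eqP /negPf].
by rewrite rowE => ->.
Qed.

Lemma hs_sq_band_op_le (m : nat) (s : 'I_m -> int) W C (L : nat) :
  0 <= C -> (forall k p i j, absc (W k p i j) <= C) ->
  (forall k p i j, (L%:Z < `|p + s k|)%R -> W k p i j = 0) ->
  (hs_sq (band_op s W) <= (band_bound m C *+ n *+ (2 * L).+1)%:E)%E.
Proof.
move=> C_ge0 W_le W_supp; set B := band_bound m C *+ n.
have B_ge0 : 0 <= B by rewrite mulrn_wge0 ?band_bound_ge0.
have col_le r : (\sum_(l < n) l2sq (band_op s W (@Defs.basis R n r l)) <=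
                 (if (`|r| <= L%:Z)%R then B else 0)%:E)%E.
  case: ifP => hr.
    have -> : B = \sum_(l < n) band_bound m C by rewrite sumr_const card_ord.
    rewrite -sumEFin; apply: lee_sum => l _.
    have e_l2 : inl2 (@Defs.basis R n r l) by rewrite /inl2 l2sq_basis ltry.
    apply: le_trans (l2sq_band_op_le s C_ge0 W_le e_l2) _.
    by rewrite l2sq_basis mule1.
  rewrite big1 // => l _; rewrite /l2sq esum1 // => -[p i] _ /=.
  rewrite /band_op big1 ?absc0 ?expr0n // => k _; rewrite big1 // => j _.
  rewrite /Defs.basis; case: eqP => [e|_]; last by rewrite mulr0.
  by rewrite W_supp ?mul0r // e ltNge hr.
rewrite /hs_sq esum_int_ord => [|k]; last exact: l2sq_ge0.
apply: le_trans (le_esum (fun r _ => col_le r)) _.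
rewrite (@esum_int_window _ L) => [||r]; first last.
- by rewrite ltNge => /negPf ->.
- by move=> r; case: ifP; rewrite lee_fin.
have -> : B *+ (2 * L).+1 = \sum_(k < (2 * L).+1) B by rewrite sumr_const card_ord.
by rewrite -sumEFin; apply: lee_sum => k _; case: ifP => _; rewrite lee_fin.
Qed.

Lemma hs_sq_commJ_band_op_le (m N : nat) (s : 'I_m -> int) W C :
  0 <= C -> (forall k p i j, absc (W k p i j) <= C) ->
  (forall k, (`|s k| <= N%:Z)%R) ->
  (hs_sq (commJ (band_op s W)) <=
     (band_bound m (C * 2) *+ n *+ (2 * (2 * N)).+1)%:E)%E.
Proof.
move=> C_ge0 W_le s_le; rewrite commJ_band_op; apply: hs_sq_band_op_le.
- by rewrite mulr_ge0.
- move=> k p i j; rewrite abscM ler_pM ?absc_ge0 //.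
  by apply: le_trans (abscB _ _) _; rewrite !absc_J_sign.
(* [J] only changes sign between [0] and [1], so away from the origin the two
   signs agree *)
- move=> k p i j hp; rewrite /J_sign; have := s_le k; move: hp.
  by case: (ltP 0 (p + s k)); case: (ltP 0 p); rewrite ?subrr ?mulr0 //; lia.
Qed.

End BandOperators.

Lemma expR_lipschitz (R : realType) (D u v : R) : `|u| <= D -> `|v| <= D ->
  `|expR u - expR v| <= expR D * `|u - v|.
Proof.
wlog: u v / u <= v => [hw hu hv|uv hu hv].
  case: (leP u v) => h; first exact: hw.
  by rewrite distrC (distrC u); apply: hw => //; apply: ltW.
have d_ge0 : 0 <= v - u by lra.
have expv : expR v = expR u * expR (v - u) by rewrite -expRD addrC subrK.
(* [1 - d <= e^-d] gives [e^d - 1 <= d e^d] *)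
have exp_sub1_le : expR (v - u) - 1 <= (v - u) * expR (v - u).
  have := expR_ge1Dx (- (v - u)); rewrite expRN => h.
  have : (1 - (v - u)) * expR (v - u) <= 1.
    by apply: le_trans (ler_wpM2r (ltW (expR_gt0 _)) h) _; rewrite mulVf ?gt_eqF ?expR_gt0.
  lra.
rewrite distrC ger0_norm ?subr_ge0 ?ler_expR // distrC ger0_norm //.
have expv_le : expR v <= expR D by rewrite ler_expR; move: hv; rewrite ler_norml => /andP [].
apply: le_trans (_ : expR v * (v - u) <= _); last by rewrite ler_wpM2r.
by rewrite expv -[X in _ - X <= _]mulr1 -mulrBr -mulrA ler_pM2l ?expR_gt0 // mulrC.
Qed.

Lemma interp_norm_le (R : realType) (t l D : R) : 0 <= t <= 1 -> `|l| <= D ->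
  `|(1 - t) / 2 * l| <= D.
Proof.
move=> /andP [t0 t1] hl; rewrite normrM; apply: le_trans hl.
by rewrite ler_piMl ?normr_ge0 // ger0_norm ?divr_ge0; lra.
Qed.

Section Weights.
Variables (R : realType) (a : int -> R) (M : R).
Hypothesis a_gt0 : forall p, 0 < a p.
Hypothesis a_even : forall p, a (- p) = a p.
Hypothesis a_ratio_le : forall p, a p / a (p + 1) <= M.

Definition weight (t : R) (p : int) : R := expR ((1 - t) / 2 * ln (a p)).
Definition weight_ratio (t : R) (p q : int) : R := weight t p / weight t (p + q).
Definition ln_step : R := ln (Num.max M 1).

Lemma weight_gt0 t p : 0 < weight t p.
Proof. exact: expR_gt0. Qed.

Lemma ln_step_ge0 : 0 <= ln_step.
Proof. by rewrite ln_ge0 // le_max lexx orbT. Qed.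

(* both [a_p / a_(p+1)] and, by evenness, [a_(p+1) / a_p] are at most [M] *)
Lemma ln_a_step_le p : `|ln (a p) - ln (a (p + 1))| <= ln_step.
Proof.
have ratio_le x : 0 < x -> x <= M -> ln x <= ln_step.
  by move=> x0 xM; rewrite ler_ln ?posrE ?lt_max ?ltr01 ?orbT // le_max xM.
rewrite ler_norml lerNl opprB -!ln_div ?posrE // !ratio_le ?divr_gt0 //.
by rewrite -(a_even p) -(a_even (p + 1)) (_ : - p = - (p + 1) + 1) ?a_ratio_le //; ring.
Qed.

Lemma ln_a_dist_le (N : nat) p q : (`|q| <= N%:Z)%R ->
  `|ln (a p) - ln (a (p + q))| <= N%:R * ln_step.
Proof.
have dist_nat (k : nat) r : `|ln (a r) - ln (a (r + k%:Z))| <= k%:R * ln_step.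
  elim: k => [|k IH]; first by rewrite addr0 subrr normr0 mul0r.
  rewrite -(subrK (ln (a (r + k%:Z))) (ln (a r))) -addrA.
  apply: le_trans (ler_normD _ _) _; rewrite -natr1 mulrDl mul1r lerD //.
  by rewrite (_ : r + k.+1%:Z = r + k%:Z + 1) ?ln_a_step_le // -addrA -PoszD addn1.
case: q => k hq.
  apply: (le_trans (dist_nat k p)); rewrite ler_wpM2r ?ln_step_ge0 // ler_nat.
  by rewrite -lez_nat.
have -> : ln (a p) = ln (a (p + Negz k + k.+1%:Z)) by rewrite NegzE addrNK.
rewrite distrC.
apply: (le_trans (dist_nat k.+1 _)); rewrite ler_wpM2r ?ln_step_ge0 // ler_nat.
by move: hq; rewrite NegzE normrN lez_nat.
Qed.

Lemma weight_ratioE t p q :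
  weight_ratio t p q = expR ((1 - t) / 2 * (ln (a p) - ln (a (p + q)))).
Proof. by rewrite /weight_ratio /weight -expRN -expRD mulrBr. Qed.

Lemma weight_ratio_gt0 t p q : 0 < weight_ratio t p q.
Proof. by rewrite weight_ratioE expR_gt0. Qed.

Lemma weight_ratio_le (N : nat) t p q : 0 <= t <= 1 -> (`|q| <= N%:Z)%R ->
  weight_ratio t p q <= expR (N%:R * ln_step).
Proof.
move=> ht hq; rewrite weight_ratioE ler_expR; apply: le_trans (ler_norm _) _.
exact: interp_norm_le (ln_a_dist_le p hq).
Qed.

Lemma weight_ratio_lipschitz (N : nat) t t' p q :
  0 <= t <= 1 -> 0 <= t' <= 1 -> (`|q| <= N%:Z)%R ->
  `|weight_ratio t p q - weight_ratio t' p q| <=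
    expR (N%:R * ln_step) * (N%:R * ln_step * `|t - t'|).
Proof.
move=> ht ht' hq; rewrite !weight_ratioE.
have hl := ln_a_dist_le p hq.
apply: le_trans (expR_lipschitz (interp_norm_le ht hl) (interp_norm_le ht' hl)) _.
rewrite ler_wpM2l ?expR_ge0 // -mulrBl.
rewrite (_ : (1 - t) / 2 - (1 - t') / 2 = (t' - t) / 2); last by ring.
rewrite normrM [X in _ <= X]mulrC ler_pM ?normr_ge0 //.
by rewrite normrM distrC ger0_norm ?invr_ge0 // ler_piMr ?normr_ge0 //; lra.
Qed.

Lemma weight0 p : weight 0 p = Num.sqrt (a p).
Proof.
have -> : a p = weight 0 p ^+ 2.
  by rewrite /weight expr2 -expRD -mulrDl subr0 -splitr mul1r lnK ?posrE.
by rewrite sqrtr_sqr ger0_norm // ltW // weight_gt0.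
Qed.

Lemma weight1 p : weight 1 p = 1.
Proof. by rewrite /weight subrr !mul0r expR0. Qed.

End Weights.

Section UnitCircle.
Variable R : realType.

(* the rational parametrisation of the unit circle, giving infinitely many points on it *)
Definition circle_pt (m : nat) : R[i] :=
  ((1 - m%:R ^+ 2) / (1 + m%:R ^+ 2)) +i* (2 * m%:R / (1 + m%:R ^+ 2)).

Lemma circle_pt_den_neq0 (m : nat) : 1 + m%:R ^+ 2 != 0 :> R.
Proof. by rewrite lt0r_neq0 // ltr_pwDl // sqr_ge0. Qed.

Lemma absc_circle_pt m : absc (circle_pt m) = 1.
Proof.
have := circle_pt_den_neq0 m.
by rewrite /absc /Normc.normc /circle_pt /= => h; rewrite (_ : _ + _ = 1) ?sqrtr1 //; field.
Qed.

Lemma circle_pt_inj : injective circle_pt.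
Proof.
move=> m m' [] /eqP; rewrite eqr_div ?circle_pt_den_neq0 // => /eqP h _.
have /eqP : (m%:R : R) ^+ 2 = m'%:R ^+ 2 by lra.
by rewrite eqrXn2 // eqr_nat => /eqP.
Qed.

Lemma coef_eq0_on_unit_circle (K : nat) (e : nat -> R[i]) :
  (forall z, absc z = 1 -> \sum_(r < K) e r * z ^+ r = 0) ->
  forall r, (r < K)%N -> e r = 0.
Proof.
move=> e_root r hr; pose P := \poly_(r < K) e r.
suff P0 : P = 0 by have := congr1 (fun p : {poly R[i]} => p`_r) P0; rewrite coef_poly hr coef0.
apply/eqP; apply: contraT => P_neq0.
have := max_poly_roots P_neq0 (rs := map circle_pt (iota 0 K)).
rewrite size_map size_iota map_inj_uniq ?iota_uniq //; last exact: circle_pt_inj.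
have -> : all (root P) (map circle_pt (iota 0 K)).
  by apply/allP => z /mapP [m _ ->]; rewrite /root horner_poly e_root ?absc_circle_pt.
by move=> /(_ isT isT); rewrite ltnNge size_poly.
Qed.

End UnitCircle.

Definition centered (N : nat) (k : 'I_(2 * N).+1) : int := k%:Z - N%:Z.

Lemma centered_le N (k : 'I_(2 * N).+1) : (`|centered k| <= N%:Z)%R.
Proof. by have := ltn_ord k; rewrite /centered ler_norml; lia. Qed.

Lemma centered_rev N (k : 'I_(2 * N).+1) : centered (rev_ord k) = - centered k.
Proof. by have := ltn_ord k; rewrite /centered /=; lia. Qed.

Lemma centeredB N (k k' : 'I_(2 * N).+1) :
  centered k - centered k' = (k + 2 * N - k')%N%:Z - (2 * N)%N%:Z.
Proof. by have := ltn_ord k'; have := ltn_ord k; rewrite /centered; lia. Qed.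

Lemma sum_ord_delta (V : zmodType) (K j : nat) (f : nat -> V) : (j < K)%N ->
  \sum_(r < K) (if (r == j :> nat) then f r else 0) = f j.
Proof.
move=> hj; rewrite (bigD1 (Ordinal hj)) //= eqxx big1 ?addr0 // => r hr.
by rewrite ifF //; apply: contraNF hr => /eqP e; apply/eqP/val_inj.
Qed.

(* collects the [c k k'] with [k - k' = r - 2N]; the offset keeps the index in [nat] *)
Definition diag_sum (V : zmodType) (N : nat) (c : 'I_(2 * N).+1 -> 'I_(2 * N).+1 -> V)
    (r : nat) : V :=
  \sum_(k < (2 * N).+1) \sum_(k' < (2 * N).+1) (if (k + 2 * N - k' == r)%N then c k k' else 0).

Lemma sum_ord2_by_diag (V : ringType) (N : nat)
    (c : 'I_(2 * N).+1 -> 'I_(2 * N).+1 -> V) (G : int -> V) :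
  \sum_(k < (2 * N).+1) \sum_(k' < (2 * N).+1) c k k' * G (centered k - centered k') =
  \sum_(r < (2 * (2 * N)).+1) diag_sum c r * G (r%:Z - (2 * N)%N%:Z).
Proof.
rewrite /diag_sum.
under [RHS]eq_bigr do rewrite mulr_suml; rewrite [RHS]exchange_big; apply: eq_bigr => k _.
under [RHS]eq_bigr do rewrite mulr_suml; rewrite [RHS]exchange_big; apply: eq_bigr => k' _.
have hr : (k + 2 * N - k' < (2 * (2 * N)).+1)%N by have := ltn_ord k; have := ltn_ord k'; lia.
rewrite centeredB -(sum_ord_delta (fun r => c k k' * G (r%:Z - (2 * N)%N%:Z)) hr).
by apply: eq_bigr => r _; rewrite eq_sym; case: eqP => [<-|_]; rewrite ?mul0r.
Qed.

(* A Laurent polynomial identity on the unit circle is an identity between the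
   coefficients, hence also holds after substituting shifts for powers of [z]. *)
Lemma laurent_unit_circle_shift (R : realType) (N : nat)
    (c : 'I_(2 * N).+1 -> 'I_(2 * N).+1 -> R[i]) (d : R[i]) :
  (forall z, absc z = 1 ->
     \sum_(k < (2 * N).+1) \sum_(k' < (2 * N).+1)
        c k k' * z ^ (centered k - centered k') = d) ->
  forall (y : int -> R[i]) (p : int),
     \sum_(k < (2 * N).+1) \sum_(k' < (2 * N).+1)
        c k k' * y (p + (centered k - centered k')) = d * y p.
Proof.
move=> c_circle y p; have h2N : (2 * N < (2 * (2 * N)).+1)%N by lia.
have diagE r : (r < (2 * (2 * N)).+1)%N -> diag_sum c r = if r == 2 * N then d else 0.
  move=> hr; apply/eqP; rewrite -subr_eq0; apply/eqP; move: r hr.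
  apply: (coef_eq0_on_unit_circle (e := fun r => diag_sum c r - (if r == 2 * N then d else 0))).
  move=> z z1; have z0 := unit_circle_neq0 z1.
  under eq_bigr do rewrite mulrBl; rewrite sumrB.
  rewrite [X in _ - X](eq_bigr (fun r : 'I_ _ => if r == 2 * N :> nat then d * z ^+ r else 0));
    last by move=> r _; case: eqP; rewrite ?mul0r.
  rewrite (sum_ord_delta (fun r => d * z ^+ r) h2N) -(c_circle z z1) sum_ord2_by_diag.
  rewrite mulr_suml; apply/eqP; rewrite subr_eq0; apply/eqP.
  apply: eq_bigr => r _; rewrite -mulrA; congr (_ * _).
  by rewrite exprnP [X in _ = _ * X]exprnP -expfzDr // subrK.
rewrite (sum_ord2_by_diag c (fun e => y (p + e))) -(sum_ord_delta (fun _ => d * y p) h2N).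
apply: eq_bigr => r _; rewrite diagE //; case: eqP => [->|_]; last by rewrite mul0r.
by rewrite subrr addr0.
Qed.

Section LoopInverse.
Variables (R : realType) (n : nat).
Implicit Types (A : coeffs R n) (N : nat).

(* the coefficients of [z |-> gamma(z)^*] on the unit circle, where [conj z = z^-1] *)
Definition loop_adj A : coeffs R n := fun q => \matrix_(i, j) Num.conj (A (- q) j i).

Lemma conj_exprz (z : R[i]) (q : int) : Num.conj (z ^ q) = Num.conj z ^ q.
Proof. by case: q => m /=; rewrite ?fmorphV rmorphXn. Qed.

Lemma loop_evalE N A z i j :
  loop_eval N A z i j = \sum_(k < (2 * N).+1) z ^ centered k * A (centered k) i j.
Proof. by rewrite /loop_eval summxE; apply: eq_bigr => k _; rewrite mxE. Qed.

Lemma loop_actE N A x p i : loop_act N A x p i =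
  \sum_(k < (2 * N).+1) \sum_(j < n) A (centered k) i j * x (p + centered k) j.
Proof. by []. Qed.

Lemma conj_loop_eval_coef N (z a b : R[i]) (k k' : 'I_(2 * N).+1) : absc z = 1 ->
  z ^ centered k * a * Num.conj (z ^ centered k' * b) =
  a * Num.conj b * z ^ (centered k - centered k').
Proof.
move=> z1; rewrite rmorphM /= conj_exprz conj_unit_circle // exprz_inv.
by rewrite (expfzDr (centered k) (- centered k') (unit_circle_neq0 z1)); ring.
Qed.

Lemma unitary_loop_coef_row N A : unitary_loop N A ->
  forall i j z, absc z = 1 ->
  \sum_(k < (2 * N).+1) \sum_(k' < (2 * N).+1)
     (\sum_(l < n) A (centered k) i l * Num.conj (A (centered k') j l)) *
     z ^ (centered k - centered k') = (i == j)%:R.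
Proof.
move=> unitA i j z z1; have := congr1 (fun B : 'M[R[i]]_n => B i j) (unitA z z1).
rewrite !mxE => <-; symmetry.
under eq_bigr do rewrite !mxE !loop_evalE rmorph_sum mulr_suml.
rewrite exchange_big; apply: eq_bigr => k _.
under eq_bigr do rewrite mulr_sumr.
rewrite exchange_big; apply: eq_bigr => k' _.
by rewrite mulr_suml; apply: eq_bigr => l _; apply: conj_loop_eval_coef.
Qed.

Lemma unitary_loop_coef_col N A : unitary_loop N A ->
  forall i j z, absc z = 1 ->
  \sum_(k < (2 * N).+1) \sum_(k' < (2 * N).+1)
     (\sum_(l < n) Num.conj (A (centered k') l i) * A (centered k) l j) *
     z ^ (centered k - centered k') = (i == j)%:R.
Proof.
move=> unitA i j z z1; have := congr1 (fun B : 'M[R[i]]_n => B i j) (mulmx1C (unitA z z1)).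
rewrite !mxE => <-; symmetry.
under eq_bigr do rewrite !mxE !loop_evalE rmorph_sum mulr_sumr.
rewrite exchange_big; apply: eq_bigr => k _.
under eq_bigr do rewrite mulr_suml.
rewrite exchange_big; apply: eq_bigr => k' _.
rewrite mulr_suml; apply: eq_bigr => l _.
by rewrite mulrC conj_loop_eval_coef // [A _ _ _ * _]mulrC.
Qed.

Lemma sum_kronecker (i : 'I_n) (F : 'I_n -> R[i]) : \sum_(j < n) (i == j)%:R * F j = F i.
Proof.
rewrite (bigD1 i) //= eqxx mul1r big1 ?addr0 // => j.
by rewrite eq_sym => /negPf ->; rewrite mul0r.
Qed.

Lemma loop_act_adjK N A : unitary_loop N A ->
  cancel (loop_act N (loop_adj A)) (loop_act N A).
Proof.
move=> unitA x; apply/funext => p; apply/funext => i.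
transitivity (\sum_(k < (2 * N).+1) \sum_(k' < (2 * N).+1) \sum_(l < n) \sum_(j < n)
   A (centered k) i l * (Num.conj (A (centered k') j l) *
                         x (p + (centered k - centered k')) j)).
  rewrite loop_actE; apply: eq_bigr => k _.
  under eq_bigr do rewrite loop_actE mulr_sumr.
  rewrite exchange_big /= (reindex_inj rev_ord_inj) /=; apply: eq_bigr => k' _.
  apply: eq_bigr => l _; rewrite mulr_sumr; apply: eq_bigr => j _.
  by rewrite /loop_adj mxE centered_rev opprK -addrA.
rewrite -(sum_kronecker i (x p)).
under [RHS]eq_bigr => j _ do
  rewrite -(laurent_unit_circle_shift (unitary_loop_coef_row unitA i j) (fun r => x r j)).
symmetry; rewrite exchange_big; apply: eq_bigr => k _.
rewrite exchange_big; apply: eq_bigr => k' _.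
under eq_bigr do rewrite mulr_suml.
by rewrite exchange_big; apply: eq_bigr => l _; apply: eq_bigr => j _; rewrite mulrA.
Qed.

Lemma loop_actK N A : unitary_loop N A ->
  cancel (loop_act N A) (loop_act N (loop_adj A)).
Proof.
move=> unitA x; apply/funext => p; apply/funext => i.
transitivity (\sum_(k < (2 * N).+1) \sum_(k' < (2 * N).+1) \sum_(l < n) \sum_(j < n)
   Num.conj (A (centered k') l i) * (A (centered k) l j *
                                     x (p + (centered k - centered k')) j)).
  rewrite loop_actE (reindex_inj rev_ord_inj) /=.
  under eq_bigr => k' _ do
    [under eq_bigr => l _ do rewrite loop_actE mulr_sumr; rewrite exchange_big /=].
  rewrite exchange_big /=; apply: eq_bigr => k _; apply: eq_bigr => k' _.
  apply: eq_bigr => l _; rewrite mulr_sumr; apply: eq_bigr => j _.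
  rewrite /loop_adj mxE centered_rev opprK.
  by rewrite (_ : p + - centered k' + centered k = p + (centered k - centered k')) //; ring.
rewrite -(sum_kronecker i (x p)).
under [RHS]eq_bigr => j _ do
  rewrite -(laurent_unit_circle_shift (unitary_loop_coef_col unitA i j) (fun r => x r j)).
symmetry; rewrite exchange_big; apply: eq_bigr => k _.
rewrite exchange_big; apply: eq_bigr => k' _.
under eq_bigr do rewrite mulr_suml.
by rewrite exchange_big; apply: eq_bigr => l _; apply: eq_bigr => j _; rewrite mulrA.
Qed.

End LoopInverse.

Lemma Jclose_band_op (R : realType) (n m N : nat) (s : 'I_m -> int)
    (W1 W2 : 'I_m -> int -> 'I_n -> 'I_n -> R[i]) (c eps : R) :
  (forall k, (`|s k| <= N%:Z)%R) -> 0 <= c ->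
  (forall k p i j, absc (W1 k p i j - W2 k p i j) <= c) ->
  (m * n)%:R ^+ 2 * (4 * n * (2 * (2 * N)).+1).+1%:R * c ^+ 2 < eps ->
  Jclose (band_op s W1) (band_op s W2) eps.
Proof.
move=> s_le c_ge0 W_le small; have mn_ge0 : 0 <= (m * n)%:R ^+ 2 :> R by apply: sqr_ge0.
rewrite /Jclose band_opB; split.
  apply: le_lt_trans (opnorm_sq_band_op_le s c_ge0 W_le) _; rewrite lte_fin.
  apply: le_lt_trans small; rewrite /band_bound ler_wpM2r ?sqr_ge0 //.
  by rewrite ler_peMr // ler1n.
apply: le_lt_trans (hs_sq_commJ_band_op_le c_ge0 W_le s_le) _; rewrite lte_fin.
apply: le_lt_trans small; have -> : band_bound n m (c * 2) *+ n *+ (2 * (2 * N)).+1 =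
          (m * n)%:R ^+ 2 * (4 * n * (2 * (2 * N)).+1)%:R * c ^+ 2.
  by rewrite /band_bound -mulrnA -mulr_natr !natrM; ring.
by rewrite ler_wpM2r ?sqr_ge0 // ler_wpM2l // ler_nat.
Qed.

Section WeightedLoops.
Variables (R : realType) (n : nat) (a : int -> R).
Implicit Types (A : coeffs R n) (N : nat) (t : R).

Definition wloop_act N t A : op R n := fun x p i =>
  (weight a t p)%:C * loop_act N A (fun r j => ((weight a t r)^-1)%:C * x r j) p i.

Definition wloop_coef N t A (k : 'I_(2 * N).+1) (p : int) (i j : 'I_n) : R[i] :=
  (weight_ratio a t p (centered k))%:C * A (centered k) i j.

Lemma wloop_act_band N t A : wloop_act N t A = band_op (@centered N) (wloop_coef t A).
Proof.
apply/funext => x; apply/funext => p; apply/funext => i.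
rewrite /wloop_act loop_actE /band_op mulr_sumr; apply: eq_bigr => k _.
rewrite mulr_sumr; apply: eq_bigr => j _.
by rewrite /wloop_coef /weight_ratio rmorphM /=; ring.
Qed.

Lemma wloop_act_can N t A B :
  cancel (loop_act N A) (loop_act N B) -> cancel (wloop_act N t A) (wloop_act N t B).
Proof.
have weightK r : ((weight a t r)^-1)%:C * (weight a t r)%:C = 1 :> R[i].
  by rewrite -rmorphM mulVf ?gt_eqF ?weight_gt0.
move=> AK x; apply/funext => p; apply/funext => i; rewrite /wloop_act.
set y := fun r j => _ * x r j.
have -> : (fun r j => ((weight a t r)^-1)%:C * ((weight a t r)%:C * loop_act N A y r j)) =
          loop_act N A y.
  by apply/funext => r; apply/funext => j; rewrite mulrA weightK mul1r.
by rewrite AK /y mulrA -rmorphM mulfV ?gt_eqF ?weight_gt0 // mul1r.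
Qed.

Lemma wloop_act0 N A x : (forall p, 0 < a p) -> wloop_act N 0 A x = PhiT a N A x.
Proof.
move=> a_gt0; apply/funext => p; apply/funext => i.
rewrite /wloop_act /PhiT /Tmap /Tinv weight0 //; congr (_ * loop_act _ _ _ _ _).
by apply/funext => r; apply/funext => j; rewrite weight0 // fmorphV.
Qed.

Lemma wloop_act1 N A x : wloop_act N 1 A x = loop_act N A x.
Proof.
apply/funext => p; apply/funext => i; rewrite /wloop_act weight1 rmorph1 mul1r.
by congr loop_act; apply/funext => r; apply/funext => j; rewrite weight1 invr1 rmorph1 mul1r.
Qed.

Lemma loop_act_widen N A : supported N A -> loop_act N A = loop_act N.+1 A.
Proof.
move=> suppA; apply/funext => x; apply/funext => p; apply/funext => i; rewrite !loop_actE.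
pose g (M k : nat) := \sum_(j < n) A (k%:Z - M%:Z) i j * x (p + (k%:Z - M%:Z)) j.
have g_out (k : nat) : k = 0%N \/ k = (2 * N).+2 -> g N.+1 k = 0.
  move=> hk; rewrite /g big1 // => j _; rewrite suppA ?mxE ?mul0r //.
  by case: hk => ->; [rewrite sub0r normrN ger0_norm | rewrite ger0_norm]; lia.
rewrite -(big_mkord xpredT (g N)) -(big_mkord xpredT (g N.+1)).
rewrite (_ : (2 * N.+1).+1 = ((2 * N).+1).+2); last by rewrite mulnS.
rewrite [RHS]big_nat_recl // [X in _ + X]big_nat_recr //= !g_out ?add0r ?addr0;
  [|by right|by left].
apply: eq_bigr => k _; rewrite /g (_ : k.+1%:Z - N.+1%:Z = k%:Z - N%:Z) //; lia.
Qed.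

Lemma loop_act_deg_indep N N' A :
  supported N A -> supported N' A -> loop_act N A = loop_act N' A.
Proof.
suff widen N1 N2 : supported N1 A -> (N1 <= N2)%N -> loop_act N1 A = loop_act N2 A.
  by move=> hN hN'; rewrite (widen _ _ hN (leq_maxl N N')) (widen _ _ hN' (leq_maxr N N')).
move=> hN1; elim: N2 => [|N2 IH]; first by rewrite leqn0 => /eqP ->.
rewrite leq_eqVlt => /orP [/eqP -> //|]; rewrite ltnS => le12.
by rewrite IH // loop_act_widen // => q hq; apply: hN1; lia.
Qed.

(* [wloop_act] needs a degree bound, which the homotopy has to choose from [A] alone *)
Definition loop_deg A : nat := xget 0%N [set N | supported N A].

Lemma wloop_act_loop_deg N t A : supported N A -> wloop_act (loop_deg A) t A = wloop_act N t A.
Proof.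
move=> suppA; rewrite /wloop_act (@loop_act_deg_indep (loop_deg A) N) //.
exact: (xgetPex 0%N (P := [set N | supported N A]) (ex_intro _ N suppA)).
Qed.

Definition coef_norm1 N A : R :=
  \sum_(k < (2 * N).+1) \sum_(i < n) \sum_(j < n) absc (A (centered k) i j).

Lemma coef_norm1_ge0 N A : 0 <= coef_norm1 N A.
Proof. by do 3![apply: sumr_ge0 => ? _]; apply: absc_ge0. Qed.

Lemma coef_le_norm1 N A (k : 'I_(2 * N).+1) i j : absc (A (centered k) i j) <= coef_norm1 N A.
Proof.
have le_sum (I : finType) (F : I -> R) l : (forall l', 0 <= F l') -> F l <= \sum_l' F l'.
  by move=> F_ge0; rewrite (bigD1 l) //= lerDl sumr_ge0.
apply: le_trans (le_sum _ _ k _) => [|k']; last by do 2![apply: sumr_ge0 => ? _]; apply: absc_ge0.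
apply: le_trans (le_sum _ _ i _) => [|i']; last by apply: sumr_ge0 => ? _; apply: absc_ge0.
by apply: le_sum => j'; apply: absc_ge0.
Qed.

Section Bounds.
Variable M : R.
Hypotheses (a_gt0 : forall p, 0 < a p) (a_even : forall p, a (- p) = a p).
Hypothesis a_ratio_le : forall p, a p / a (p + 1) <= M.

Let B N : R := expR (N%:R * ln_step M).

Lemma wloop_coef_le N t A (k : 'I_(2 * N).+1) p i j : 0 <= t <= 1 ->
  absc (wloop_coef t A k p i j) <= B N * coef_norm1 N A.
Proof.
have r_gt0 := weight_ratio_gt0 a t p (centered k).
move=> ht; rewrite /wloop_coef abscM absc_real (ger0_norm (ltW r_gt0)).
apply: ler_pM; rewrite ?(ltW r_gt0) ?absc_ge0 ?coef_le_norm1 //.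
exact: weight_ratio_le (centered_le k).
Qed.

Lemma wloop_act_bounded_linear N t A : 0 <= t <= 1 -> bounded_linear (wloop_act N t A).
Proof.
move=> ht; rewrite wloop_act_band; apply: (@band_op_bounded_linear _ _ _ _ _ (B N * coef_norm1 N A)).
  by rewrite mulr_ge0 ?expR_ge0 ?coef_norm1_ge0.
by move=> k p i j; apply: wloop_coef_le.
Qed.

Lemma wloop_act_GLJ N t A : 0 <= t <= 1 -> polyloop N A -> GLJ (wloop_act N t A).
Proof.
move=> ht [_ unitA]; split; first exact: wloop_act_bounded_linear.
split.
  exists (wloop_act N t (loop_adj A)); split; first exact: wloop_act_bounded_linear.
  by move=> x _; split; apply: wloop_act_can; [apply: loop_actK | apply: loop_act_adjK].
have C_ge0 : 0 <= B N * coef_norm1 N A by rewrite mulr_ge0 ?expR_ge0 ?coef_norm1_ge0.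
have W_le (k : 'I_(2 * N).+1) p i j : absc (wloop_coef t A k p i j) <= B N * coef_norm1 N A.
  exact: wloop_coef_le.
by rewrite wloop_act_band (le_lt_trans (hs_sq_commJ_band_op_le C_ge0 W_le (@centered_le N))) ?ltry.
Qed.

Definition wloop_lip N A : R :=
  B N * (N%:R * ln_step M) * (coef_norm1 N A + 1) + B N.

Lemma wloop_lip_ge0 N A : 0 <= wloop_lip N A.
Proof.
by rewrite addr_ge0 ?expR_ge0 // !mulr_ge0 ?expR_ge0 ?ln_step_ge0 ?addr_ge0 ?coef_norm1_ge0.
Qed.

Lemma wloop_coef_lipschitz N t t' A A' (d : R) (k : 'I_(2 * N).+1) p i j :
  0 <= t <= 1 -> 0 <= t' <= 1 -> 0 <= d <= 1 -> `|t - t'| < d ->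
  (forall q i j, absc (A q i j - A' q i j) < d) ->
  absc (wloop_coef t A k p i j - wloop_coef t' A' k p i j) <= d * wloop_lip N A'.
Proof.
move=> ht ht' /andP [d_ge0 d_le1] htt' hAA'.
set r := weight_ratio a t p (centered k); set r' := weight_ratio a t' p (centered k).
set x := A (centered k) i j; set x' := A' (centered k) i j.
have -> : wloop_coef t A k p i j - wloop_coef t' A' k p i j = (r - r')%:C * x + r'%:C * (x - x').
  by rewrite /wloop_coef -/r -/r' -/x -/x' rmorphB /=; ring.
have r'_ge0 : 0 <= r' by apply/ltW/weight_ratio_gt0.
have rr'_le : `|r - r'| <= B N * (N%:R * ln_step M * d).
  apply: le_trans (weight_ratio_lipschitz a_gt0 a_even a_ratio_le _ ht ht' (centered_le k)) _.
  by rewrite ler_wpM2l ?expR_ge0 // ler_wpM2l ?(ltW htt') // mulr_ge0 ?ln_step_ge0.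
have x_le : absc x <= coef_norm1 N A' + 1.
  rewrite -[x](subrK x') addrC; apply: le_trans (abscD _ _) _.
  by rewrite lerD ?coef_le_norm1 // (le_trans (ltW (hAA' _ _ _))).
have r'_le : r' <= B N by apply: weight_ratio_le (centered_le k).
apply: le_trans (abscD _ _) _; rewrite !abscM !absc_real (ger0_norm r'_ge0).
apply: le_trans (lerD (ler_pM (normr_ge0 _) (absc_ge0 _) rr'_le x_le)
                      (ler_pM r'_ge0 (absc_ge0 _) r'_le (ltW (hAA' _ _ _)))) _.
by rewrite /wloop_lip le_eqVlt; apply/orP; left; apply/eqP; ring.
Qed.

Lemma wloop_act_Jclose N t' A' : 0 <= t' <= 1 -> forall eps, 0 < eps ->
  exists2 delta, 0 < delta & forall t A, 0 <= t <= 1 -> `|t - t'| < delta ->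
    (forall q i j, absc (A q i j - A' q i j) < delta) ->
    Jclose (wloop_act N t A) (wloop_act N t' A') eps.
Proof.
move=> ht' eps eps_gt0; set L := wloop_lip N A'.
set Q : R := ((2 * N).+1 * n)%:R ^+ 2 * (4 * n * (2 * (2 * N)).+1).+1%:R.
have Q_ge0 : 0 <= Q by rewrite mulr_ge0 ?sqr_ge0.
have QL_ge0 : 0 <= Q * L ^+ 2 by rewrite mulr_ge0 ?sqr_ge0.
have E_gt0 : 0 < Q * L ^+ 2 + 1 by rewrite ltr_wpDl.
set d := Num.min 1 (eps / (Q * L ^+ 2 + 1)).
have d_gt0 : 0 < d by rewrite lt_min ltr01 divr_gt0.
exists d => // t A ht htt' hAA'.
have d_le1 : d <= 1 by rewrite ge_min lexx.
have dE_le : d * (Q * L ^+ 2 + 1) <= eps by rewrite -ler_pdivlMr // ge_min lexx orbT.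
rewrite !wloop_act_band; apply: (@Jclose_band_op _ _ _ N _ _ _ (d * L)).
- exact: centered_le.
- by rewrite mulr_ge0 ?(ltW d_gt0) ?wloop_lip_ge0.
- by move=> k p i j; apply: wloop_coef_lipschitz => //; rewrite (ltW d_gt0) d_le1.
(* [Q (d L)^2 <= d Q L^2 < d (Q L^2 + 1)] since [d <= 1] *)
apply: le_lt_trans (_ : d * (Q * L ^+ 2) < eps); last first.
  by apply: lt_le_trans dE_le; rewrite ltr_pM2l // ltrDl.
rewrite -/Q exprMn mulrCA ler_wpM2r //.
by rewrite expr2 ler_piMr ?(ltW d_gt0).
Qed.

End Bounds.

End WeightedLoops.

Local Close Scope complex_scope.
Local Close Scope classical_set_scope.
Unset Implicit Arguments.

Theorem mainTheorem20 (R : realType) (n : nat) (a : int -> R) :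
  (forall p, 0 < a p) ->
  rapidly_decreasing a ->
  (forall p, a (- p) = a p) ->
  (exists M : R, forall p, a p / a (p + 1) <= M) ->
  exists F : R -> coeffs R n -> op R n,
    (forall (t : R) (N : nat) (A : coeffs R n),
        0 <= t <= 1 -> polyloop N A -> GLJ (F t A)) /\
    (forall (N : nat) (A : coeffs R n), polyloop N A ->
       forall x : vec R n, inl2 x ->
         F 0 A x = PhiT a N A x /\ F 1 A x = loop_act N A x) /\
    (forall (N : nat) (t0 : R) (A0 : coeffs R n),
        0 <= t0 <= 1 -> polyloop N A0 ->
        forall eps : R, 0 < eps ->
        exists delta : R, 0 < delta /\
          forall (t : R) (A : coeffs R n),
            0 <= t <= 1 -> polyloop N A -> `|t - t0| < delta ->
            (forall q i j, absc (A q i j - A0 q i j) < delta) ->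
            Jclose (F t A) (F t0 A0) eps).
Proof.
move=> a_gt0 _ a_even [M a_ratio_le].
exists (fun t A => wloop_act a (loop_deg A) t A); split; last split.
- move=> t N A ht polyA; rewrite (wloop_act_loop_deg _ _ polyA.1).
  exact: wloop_act_GLJ a_gt0 a_even a_ratio_le _ _ _ ht polyA.
- move=> N A [suppA _] x _; rewrite !(wloop_act_loop_deg _ _ suppA).
  by rewrite wloop_act0 // wloop_act1.
move=> N t0 A0 ht0 [suppA0 _] eps eps_gt0.
have [delta delta_gt0 close] := wloop_act_Jclose a_gt0 a_even a_ratio_le N A0 ht0 eps_gt0.
exists delta; split=> // t A ht [suppA _] htt0 hAA0.
by rewrite (wloop_act_loop_deg _ _ suppA) (wloop_act_loop_deg _ _ suppA0); apply: close.
Qed.
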